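(* Let $p\ge3$ and consider the 1D FUSE semi-discretisation (context) of $\partial_t u+\partial_x F(u)=0$, with $F$ continuously differentiable, on a periodic mesh, using as reference nodes the Gauss–Legendre-plus-endpoints nodes: $r_0=-1$, $r_p=1$, and $r_1<\dots<r_{p-1}$ the $p-1$ Gauss–Legendre quadrature points on $[-1,1]$ with weights $\omega_1,\dots,\omega_{p-1}$. For each element define $\bar u_k=\tfrac12\sum_{i=1}^{p-1}\omega_i\,u_{i,k}$. Then (i) $\bar u_k=\frac{1}{|K_k|}\int_{K_k}u_h\,dx$, where $u_h|_{K_k}$ is the degree-$\le p$ interpolant of the nodal values on $K_k$; (ii) along solutions of the FUSE semi-discretisation, $$\frac{d\bar u_k}{dt}+\frac{1}{|K_k|}\Big(F(u_{p,k})-F(u_{0,k})\Big)=0\quad\text{for every }k;$$ and consequently (iii) $\frac{d}{dt}\sum_{k=1}^N |K_k|\,\bar u_k=0$, i.e. $\int_\Omega u_h\,dx$ is conserved (for a uniform mesh, $\sum_k\bar u_k$ is conserved).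
   Context: Setting: $\Omega=[0,1]$, periodic, mesh $0=x_0<\dots<x_N=1$, elements $K_k=[x_{k-1},x_k]$ (indices mod $N$), $|K_k|=x_k-x_{k-1}$. Nodes $s_{i,k}=x_{k-1}+\tfrac{r_i+1}{2}|K_k|$, $i=0,\dots,p$, with boundary nodes shared ($s_{p,k}=s_{0,k+1}$, a single nodal value, so $u_{p,k}=u_{0,k+1}$). $F_h^{(k)}$ is the polynomial of degree $\le p$ on $K_k$ with $F_h^{(k)}(s_{i,k})=F(u_{i,k})$. FUSE semi-discretisation: interior nodes $\frac{d}{dt}u_{i,k}=-(F_h^{(k)})'(s_{i,k})$ for $1\le i\le p-1$; at a shared node $s=s_{p,k}=s_{0,k+1}$ with value $u_s$, $\frac{d}{dt}u_s=-(F_h^{(k)})'(s)$ if $F'(u_s)>0$ and $-(F_h^{(k+1)})'(s)$ otherwise. *)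

From HB Require Import structures.
From mathcomp Require Import all_boot all_order all_algebra.
From mathcomp Require Import all_classical all_reals all_analysis.
Set Implicit Arguments. Unset Strict Implicit. Unset Printing Implicit Defensive.
Import Order.TTheory GRing.Theory Num.Theory.
Import numFieldNormedType.Exports.
Local Open Scope classical_set_scope.
Local Open Scope ring_scope.

Definition integ {R : realType} (a b : R) (f : R -> R) : R :=
  \int[(@lebesgue_measure R)]_(x in `[a, b]) f x.

(* n-point Gauss-Legendre rule on [-1,1], nodes r 1 < ... < r n, weights w 1..w n:
   the (unique) n-point rule with nodes in (-1,1) that is exact for all
   polynomials of degree <= 2n-1. *)
Definition gauss_legendre {R : realType} (n : nat) (r w : nat -> R) : Prop :=
  [/\ (forall i, (1 <= i <= n)%N -> -1 < r i < 1),
      (forall i j, (1 <= i)%N -> (i < j)%N -> (j <= n)%N -> r i < r j) &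
      (forall q : {poly R}, (size q <= 2 * n)%N ->
          \sum_(1 <= i < n.+1) w i * q.[r i] = integ (-1) 1 (fun y => q.[y]))].

Definition lagrange {R : realType} (p : nat) (xs ys : nat -> R) : {poly R} :=
  \sum_(i < p.+1) ys i *:
     \prod_(j < p.+1 | j != i) (('X - (xs j)%:P) * ((xs i - xs j)^-1)%:P).

(* Mesh 0 = x_0 < x_1 < ... < x_N = 1; elements are 0-based: K_k = [x k, x (k+1)],
   k = 0..N-1 (paper's K_{k+1}); neighbour indices are taken mod N. *)
Definition periodic_mesh {R : realType} (N : nat) (x : nat -> R) : Prop :=
  x 0%N = 0 /\ x N = 1 /\ (forall k, (k < N)%N -> x k < x k.+1).

Definition elen {R : realType} (x : nat -> R) (k : nat) : R := x k.+1 - x k.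

Definition node {R : realType} (r x : nat -> R) (k i : nat) : R :=
  x k + (r i + 1) / 2 * elen x k.

(* Nodal values: a single global array v (index j < N*p, time t), shared nodes
   stored once: u_{i,k} = v ((k*p + i) mod (N*p)), so u_{p,k} = u_{0,k+1}
   (periodically). *)
Definition uval {R : realType} (N p : nat) (v : nat -> R -> R) (k i : nat) (t : R) : R :=
  v ((k * p + i) %% (N * p))%N t.

Definition uh {R : realType} (N p : nat) (r x : nat -> R) (v : nat -> R -> R)
  (k : nat) (t : R) : {poly R} :=
  lagrange p (node r x k) (fun i => uval N p v k i t).

Definition Fh {R : realType} (N p : nat) (r x : nat -> R) (F : R -> R)
  (v : nat -> R -> R) (k : nat) (t : R) : {poly R} :=
  lagrange p (node r x k) (fun i => F (uval N p v k i t)).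

Definition ubar {R : realType} (N p : nat) (w : nat -> R) (v : nat -> R -> R)
  (k : nat) (t : R) : R :=
  2^-1 * \sum_(1 <= i < p) w i * uval N p v k i t.

Definition fuse_ode {R : realType} (N p : nat) (r x : nat -> R) (F : R -> R)
  (v : nat -> R -> R) (t : R) : Prop :=
  (forall j, (j < N * p)%N -> derivable (v j) t 1) /\
  (forall k i, (k < N)%N -> (1 <= i)%N -> (i < p)%N ->
     derive1 (uval N p v k i) t = - (deriv (Fh N p r x F v k t)).[node r x k i]) /\
  (forall k, (k < N)%N ->
     derive1 (uval N p v k p) t =
       if 0 < derive1 F (uval N p v k p t)
       then - (deriv (Fh N p r x F v k t)).[node r x k p]
       else - (deriv (Fh N p r x F v (k.+1 %% N) t)).[node r x (k.+1 %% N) 0%N]).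

From Pilot Require Import Defs.
From HB Require Import structures.
From mathcomp Require Import all_boot all_order all_algebra.
From mathcomp Require Import all_classical all_reals all_analysis.
From mathcomp Require Import zify ring lra.
Import Order.TTheory GRing.Theory Num.Theory.
Import numFieldNormedType.Exports.
Set Implicit Arguments. Unset Strict Implicit. Unset Printing Implicit Defensive.
Local Open Scope classical_set_scope.
Local Open Scope ring_scope.

(* The whole argument rests on one fact: on an element K = [a, a + h] the
   mapped Gauss-Legendre rule (h/2) sum_{i=1}^{p-1} w_i P(s_i), whose nodes are
   the interior nodes s_i = a + (r_i + 1)/2 h, integrates every polynomial of
   degree <= 2p - 3 exactly (gauss_legendre_affine, obtained from the rule on
   [-1, 1] by the affine change of variables and a polynomial antiderivative).
   (i)  u_h|K has degree <= p <= 2p - 3 and equals u_i at s_i, so ubar_k is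
        the mean of u_h over K (ubar_cell_average).
   (ii) By the interior FUSE equations d/dt u_i = -F_h'(s_i), so d/dt ubar_k is
        minus the quadrature of F_h' (degree <= p - 1), i.e. minus the mean of
        F_h' over K, which by the fundamental theorem of calculus and the
        interpolation property at the end nodes is the flux difference
        (F(u_{p,k}) - F(u_{0,k})) / |K_k| (ubar_is_derive).
   (iii) Since u_{p,k} = u_{0,k+1} and the mesh is periodic, the fluxes
        telescope (flux_telescopes) and the total mass is stationary. *)

Lemma integ_poly_deriv {R : realType} (a b : R) (Q : {poly R}) : a < b ->
  integ a b (fun y => (Q^`()).[y]) = Q.[b] - Q.[a].
Proof.
move=> ab; rewrite /integ /Rintegral (@continuous_FTC2 _ _ (horner Q)) //.
- by apply/continuous_subspaceT => z; exact: continuous_horner.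
- split=> [z _| |].
  + exact: derivable_horner.
  + by apply: cvg_at_right_filter; exact: continuous_horner.
  + by apply: cvg_at_left_filter; exact: continuous_horner.
- by move=> z _; rewrite -derivE.
Qed.

Definition antideriv {R : fieldType} (P : {poly R}) : {poly R} :=
  \poly_(i < (size P).+1) (P`_i.-1 / i%:R).

Lemma antiderivK {R : numFieldType} (P : {poly R}) : (antideriv P)^`() = P.
Proof.
apply/polyP => i; rewrite coef_deriv coef_poly ltnS.
case: ltnP => [_|le_P_i]; last by rewrite mul0rn nth_default.
by rewrite -[_ *+ _]mulr_natr -mulrA mulVf ?mulr1 // pnatr_eq0.
Qed.

Lemma integ_poly {R : realType} (a b : R) (P : {poly R}) : a < b ->
  integ a b (fun y => P.[y]) = (antideriv P).[b] - (antideriv P).[a].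
Proof. by move=> ab; rewrite -integ_poly_deriv // antiderivK. Qed.

(* The n-point Gauss-Legendre rule mapped affinely onto [a, a + h] is exact for
   polynomials of degree <= 2n - 1: compose with A(y) = a + (y + 1)/2 h, apply
   the rule on [-1, 1] to P o A = (2/h) (Q o A)' with Q the antiderivative of P,
   and compare both sides with Q(a + h) - Q(a). *)
Lemma gauss_legendre_affine {R : realType} n (r w : nat -> R) (a h : R) (P : {poly R}) :
  gauss_legendre n r w -> 0 < h -> (size P <= 2 * n)%N ->
  h / 2 * \sum_(1 <= i < n.+1) w i * P.[a + (r i + 1) / 2 * h] =
  integ a (a + h) (fun y => P.[y]).
Proof.
case=> _ _ exact_GL h_gt0 sizeP; have h_neq0 : h != 0 by rewrite gt_eqF.
pose A : {poly R} := (h / 2) *: ('X + (2 * a / h + 1)%:P).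
have A_val y : A.[y] = a + (y + 1) / 2 * h.
  by rewrite /A hornerZ hornerD hornerX hornerC; field.
have A_deriv : A^`() = (h / 2)%:P.
  by rewrite /A derivZ derivD derivX derivC addr0 -alg_polyC.
have A_size : size A = 2%N.
  by rewrite /A size_scale ?size_XaddC // mulf_neq0 ?invr_eq0 ?pnatr_eq0.
set Q := antideriv P.
have PA_deriv : P \Po A = ((2 / h) *: (Q \Po A))^`().
  rewrite derivZ deriv_comp antiderivK A_deriv [_ * (h / 2)%:P]mulrC mul_polyC.
  by rewrite scalerA (_ : 2 / h * (h / 2) = 1) ?scale1r //; field.
have := exact_GL (P \Po A); rewrite size_comp_poly2 // => /(_ sizeP).
rewrite PA_deriv integ_poly_deriv ?ltrN10 // -PA_deriv !hornerZ !horner_comp !A_val.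
rewrite integ_poly ?ltrDl // -/Q.
under eq_bigr do rewrite horner_comp A_val.
move=> ->; rewrite (_ : a + (1 + 1) / 2 * h = a + h); last by field.
rewrite (_ : a + (-1 + 1) / 2 * h = a); last by field.
by field.
Qed.

Lemma lagrange_interp {R : realType} p (xs ys : nat -> R) j :
  (forall a b, (a <= p)%N -> (b <= p)%N -> xs a = xs b -> a = b) ->
  (j <= p)%N -> (Defs.lagrange p xs ys).[xs j] = ys j.
Proof.
move=> xs_inj le_j_p; pose j' : 'I_p.+1 := Ordinal (le_j_p : (j < p.+1)%N).
have xs_diff (a b : 'I_p.+1) : a != b -> xs a - xs b != 0.
  move=> neq_ab; rewrite subr_eq0; apply: contra neq_ab => /eqP /xs_inj eq_ab.
  by apply/eqP/val_inj/eq_ab; rewrite -ltnS.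
rewrite /Defs.lagrange horner_sum (bigD1 j') //= [X in _ + X]big1 ?addr0.
  rewrite hornerZ horner_prod big1 ?mulr1 // => i neq_ij.
  by rewrite hornerM !hornerE mulfV // (xs_diff j') // eq_sym.
move=> i neq_ij; rewrite hornerZ horner_prod (bigD1 j') /=; last by rewrite eq_sym.
by rewrite hornerM hornerXsubC subrr !mul0r mulr0.
Qed.

Lemma size_lagrange {R : realType} p (xs ys : nat -> R) :
  (size (Defs.lagrange p xs ys) <= p.+1)%N.
Proof.
rewrite /Defs.lagrange; apply: (leq_trans (size_sum _ _ _)); apply/bigmax_leqP => i _.
apply: leq_trans (size_scale_leq _ _) _.
rewrite (eq_bigr (fun j : 'I_p.+1 => (xs i - xs j)^-1 *: ('X - (xs j)%:P))); last first.
  by move=> j _; rewrite mulrC mul_polyC.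
rewrite scaler_prod; apply: leq_trans (size_scale_leq _ _) _.
by rewrite -big_enum size_prod_XsubC -cardE cardC1 card_ord.
Qed.

Lemma is_derive_weighted_sum {R : realType} (I : Type) (s : seq I) (c : I -> R)
  (f : I -> R -> R) (t : R) :
  (forall i, derivable (f i) t 1) ->
  is_derive t 1 (fun u => \sum_(i <- s) c i * f i u)
     (\sum_(i <- s) c i * derive1 (f i) t).
Proof.
move=> fs_derivable; elim: s => [|h s IH].
  under eq_fun do rewrite big_nil.
  by rewrite big_nil; exact: is_derive_cst.
under eq_fun do rewrite big_cons.
rewrite big_cons; apply: is_deriveD => //.
by rewrite derive1E; apply: is_deriveZ; apply: derivableP.
Qed.

(* Shared nodes: u_{p,k} = u_{0,k+1}, and u_{0,N} = u_{0,0} by periodicity, so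
   any function of the end-node values telescopes to zero over the mesh. *)
Lemma flux_telescopes {R : realType} (N p : nat) (v : nat -> R -> R) (G : R -> R) t :
  \sum_(k < N) (G (uval N p v k p t) - G (uval N p v k 0 t)) = 0.
Proof.
have shared k : uval N p v k p t = uval N p v k.+1 0 t.
  by rewrite /uval addn0 mulSn addnC.
under eq_bigr do rewrite shared.
rewrite -(big_mkord xpredT (fun k => G (uval N p v k.+1 0 t) - G (uval N p v k 0 t))).
by rewrite telescope_sumr // /uval addn0 modnn mul0n mod0n subrr.
Qed.

Section GaussLobattoNodes.
Variables (R : realType) (p : nat) (r w : nat -> R).
Hypotheses (p_gt1 : (1 < p)%N) (r_first : r 0%N = -1) (r_last : r p = 1)
  (GL : gauss_legendre p.-1 r w).

Lemma nodes_increasing a b : (a < b)%N -> (b <= p)%N -> r a < r b.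
Proof.
case: GL => r_interior r_sorted _ lt_ab le_b_p.
have interior i : (1 <= i)%N -> (i < p)%N -> -1 < r i < 1.
  by move=> ? ?; apply: r_interior; apply/andP; split; lia.
have [->|a_gt0] := posnP a.
  rewrite r_first; have [->|neq_bp] := eqVneq b p; first by rewrite r_last; lra.
  by case/andP: (interior b ltac:(lia) ltac:(lia)).
have [eq_bp|neq_bp] := eqVneq b p.
  by rewrite eq_bp r_last; case/andP: (interior a ltac:(lia) ltac:(lia)).
by apply: r_sorted; lia.
Qed.

Lemma nodes_injective a b : (a <= p)%N -> (b <= p)%N -> r a = r b -> a = b.
Proof.
move=> le_a_p le_b_p eq_r; case: (ltngtP a b) => [lt_ab|lt_ba|//].
  by move: (nodes_increasing lt_ab le_b_p); rewrite eq_r ltxx.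
by move: (nodes_increasing lt_ba le_a_p); rewrite eq_r ltxx.
Qed.

Lemma node_first (x : nat -> R) k : node r x k 0 = x k.
Proof. by rewrite /node r_first addNr !mul0r addr0. Qed.

Lemma node_last (x : nat -> R) k : node r x k p = x k.+1.
Proof. by rewrite /node r_last /elen; field. Qed.

Section Mesh.
Variables (N : nat) (x : nat -> R).
Hypothesis mesh : periodic_mesh N x.

(* x_0 = 0 and x_N = 1 force at least one element. *)
Lemma mesh_nonempty : (0 < N)%N.
Proof.
case: mesh => x0 [xN _]; case: N xN => // xN.
by move: (oner_neq0 R); rewrite -xN x0 eqxx.
Qed.

Lemma cell_nondegenerate k : (k < N)%N -> x k < x k.+1.
Proof. by case: mesh => _ [_ x_incr]; exact: x_incr. Qed.

Lemma elen_gt0 k : (k < N)%N -> 0 < elen x k.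
Proof. by move=> lt_kN; rewrite /elen subr_gt0 cell_nondegenerate. Qed.

Lemma node_injective k : (k < N)%N ->
  forall a b, (a <= p)%N -> (b <= p)%N -> node r x k a = node r x k b -> a = b.
Proof.
move=> lt_kN a b le_a_p le_b_p /addrI /(mulIf (lt0r_neq0 (elen_gt0 lt_kN))) eq_ab.
by apply: nodes_injective => //; move: eq_ab; lra.
Qed.

Lemma interp_at_node k (ys : nat -> R) i : (k < N)%N -> (i <= p)%N ->
  (Defs.lagrange p (node r x k) ys).[node r x k i] = ys i.
Proof. by move=> lt_kN; apply/lagrange_interp/node_injective. Qed.

Lemma element_quadrature k (P : {poly R}) : (k < N)%N -> (size P <= 2 * p.-1)%N ->
  2^-1 * \sum_(1 <= i < p) w i * P.[node r x k i] =
  (elen x k)^-1 * integ (x k) (x k.+1) (fun y => P.[y]).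
Proof.
move=> lt_kN sizeP; have h_gt0 := elen_gt0 lt_kN.
have := gauss_legendre_affine (x k) GL h_gt0 sizeP.
rewrite prednK ?(ltnW p_gt1) // (_ : x k + elen x k = x k.+1); last by rewrite /elen; ring.
by move=> <-; rewrite mulrA mulrA mulVf ?mul1r ?gt_eqF.
Qed.
End Mesh.
End GaussLobattoNodes.

Section FuseConservation.
Variables (R : realType) (p N : nat) (x r w : nat -> R) (v : nat -> R -> R).
Hypotheses (p_ge3 : (3 <= p)%N) (mesh : periodic_mesh N x)
  (r_first : r 0%N = -1) (r_last : r p = 1) (GL : gauss_legendre p.-1 r w).

Let p_gt1 : (1 < p)%N. Proof. exact: ltn_trans p_ge3. Qed.
Let interp := interp_at_node p_gt1 r_first r_last GL mesh.
Let quadrature := element_quadrature p_gt1 GL mesh.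

(* (i): the weighted interior-node average is the cell average of u_h; the
   interpolant has degree <= p <= 2p-3, within reach of the quadrature. *)
Lemma ubar_cell_average k s : (k < N)%N ->
  ubar N p w v k s =
  (elen x k)^-1 * integ (x k) (x k.+1) (fun y => (uh N p r x v k s).[y]).
Proof.
move=> lt_kN; rewrite -quadrature //; last first.
  by apply: leq_trans (size_lagrange _ _ _) _; lia.
rewrite /ubar; congr (_ * _); apply: eq_big_nat => i /andP[_ lt_ip].
by rewrite /uh interp // ltnW.
Qed.

(* (ii): the interior equations alone give d/dt ubar_k = -1/2 sum_i w_i F_h'(s_{i,k}),
   which the quadrature turns into the mean of F_h' over K_k, i.e. the flux
   difference divided by |K_k|. *)
Lemma ubar_is_derive (F : R -> R) t k : (k < N)%N -> fuse_ode N p r x F v t ->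
  is_derive t 1 (ubar N p w v k)
    (- ((elen x k)^-1 * (F (uval N p v k p t) - F (uval N p v k 0 t)))).
Proof.
move=> lt_kN [v_derivable [interior_eq _]].
have N_gt0 := mesh_nonempty mesh.
have uval_derivable i : derivable (uval N p v k i) t 1.
  by apply: v_derivable; rewrite ltn_pmod // muln_gt0 N_gt0 ltnW.
set Q := Fh N p r x F v k t.
have Q_first : Q.[x k] = F (uval N p v k 0 t).
  by rewrite -(node_first r_first x k) interp.
have Q_last : Q.[x k.+1] = F (uval N p v k p t).
  by rewrite -(node_last r_last x k) interp.
have size_dQ : (size Q^`() <= 2 * p.-1)%N.
  apply: leq_trans (size_poly _ _) _; apply: leq_trans (leq_pred _) _.
  by apply: leq_trans (size_lagrange _ _ _) _; lia.
apply: is_derive_eq.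
  exact: is_deriveZ (is_derive_weighted_sum (index_iota 1 p) w uval_derivable).
rewrite -Q_first -Q_last -integ_poly_deriv ?(cell_nondegenerate mesh lt_kN) //.
rewrite -quadrature // -mulrN -sumrN /=.
congr (_ * _); apply: eq_big_nat => i /andP[le_1i lt_ip].
by rewrite interior_eq // mulrN.
Qed.

(* (iii): weighting (ii) by |K_k|, the flux differences telescope around the
   periodic mesh, so the total mass sum_k |K_k| ubar_k is stationary. *)
Lemma total_mass_is_derive (F : R -> R) t : fuse_ode N p r x F v t ->
  is_derive t 1 (fun s => \sum_(k < N) elen x k * ubar N p w v k s) 0.
Proof.
move=> ode; have ubar_D (k : 'I_N) := ubar_is_derive (ltn_ord k) ode.
apply: is_derive_eq.
  have ubar_derivable (k : 'I_N) : derivable (ubar N p w v k) t 1.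
    by case: (ubar_D k).
  exact: is_derive_weighted_sum ubar_derivable.
rewrite /= (eq_bigr (fun k : 'I_N => - (F (uval N p v k p t) - F (uval N p v k 0 t)))).
  by rewrite sumrN flux_telescopes oppr0.
move=> k _.
have ubar_Dk := ubar_D k; rewrite derive1E derive_val mulrN mulrA mulfV ?mul1r //.
by rewrite gt_eqF // (elen_gt0 mesh (ltn_ord k)).
Qed.

Lemma total_integral_eq_mass s :
  \sum_(k < N) integ (x k) (x k.+1) (fun y => (uh N p r x v k s).[y]) =
  \sum_(k < N) elen x k * ubar N p w v k s.
Proof.
apply: eq_bigr => k _; rewrite ubar_cell_average // mulrA mulfV ?mul1r //.
by rewrite gt_eqF // (elen_gt0 mesh (ltn_ord k)).
Qed.
End FuseConservation.

Theorem mainTheorem4 (R : realType) (p N : nat) (x r w : nat -> R)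
    (F : R -> R) (v : nat -> R -> R) (t : R) :
  (3 <= p)%N ->
  periodic_mesh N x ->
  (forall y, derivable F y 1) -> continuous (derive1 F) ->
  r 0%N = -1 -> r p = 1 -> gauss_legendre p.-1 r w ->
  fuse_ode N p r x F v t ->
  (* (i) *)
  (forall k, (k < N)%N ->
     ubar N p w v k t = (elen x k)^-1 * integ (x k) (x k.+1) (fun y => (uh N p r x v k t).[y]))
  (* (ii) *)
  /\ (forall k, (k < N)%N ->
     derivable (ubar N p w v k) t 1 /\
     derive1 (ubar N p w v k) t
       + (elen x k)^-1 * (F (uval N p v k p t) - F (uval N p v k 0%N t)) = 0)
  (* (iii) *)
  /\ (derivable (fun s => \sum_(k < N) elen x k * ubar N p w v k s) t 1 /\
      derive1 (fun s => \sum_(k < N) elen x k * ubar N p w v k s) t = 0)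
  /\ (derivable (fun s => \sum_(k < N) integ (x k) (x k.+1) (fun y => (uh N p r x v k s).[y])) t 1 /\
      derive1 (fun s => \sum_(k < N) integ (x k) (x k.+1) (fun y => (uh N p r x v k s).[y])) t = 0).
Proof.
move=> p_ge3 mesh _ _ r_first r_last GL ode.
have mass_D := total_mass_is_derive p_ge3 mesh r_first r_last GL ode.
split; first by move=> k; exact: ubar_cell_average.
split.
  move=> k lt_kN; have ubar_D := ubar_is_derive p_ge3 mesh r_first r_last GL lt_kN ode.
  by split; [case: ubar_D | rewrite derive1E derive_val addNr].
have mass_stationary :
    derivable (fun s => \sum_(k < N) elen x k * ubar N p w v k s) t 1 /\
    derive1 (fun s => \sum_(k < N) elen x k * ubar N p w v k s) t = 0.
  by split; [case: mass_D | rewrite derive1E derive_val].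
split=> //.
have -> : (fun s => \sum_(k < N) integ (x k) (x k.+1) (fun y => (uh N p r x v k s).[y])) =
          (fun s => \sum_(k < N) elen x k * ubar N p w v k s).
  by apply/funext => s; exact: total_integral_eq_mass.
exact: mass_stationary.
Qed.
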